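(* Consider a single-item auction setting with a feature space $\mathcal{Z}$, $n$ buyers each with unit demand and a single seller with supply $\lambda > 0$ and cost $c = 0$. Conditioned on each feature vector $z$, the buyers' bids $b_1,\dots,b_n$ are independent with $b_i \sim F_i^z$. For a pricing policy $p:\mathcal{Z}\to\mathbb{R}$ the clearing loss is $$\ell^c(p,z,\mathbf{b},c) = \sum_{i=1}^n \max\{b_i - p(z),0\} + \lambda \max\{p(z)-c,0\}.$$ Let $p$ be the pricing policy minimizing the expected clearing loss (i.e., for each $z$, $p(z)$ solves $\sum_{i=1}^n (1-F_i^z(p(z))) = \lambda$). Let $b^{(1)} = \max_i b_i$. Then the expected social welfare $\mathbb{E}[{\sf SW}] = \mathbb{E}[b^{(1)}\,\mathbf{1}[b^{(1)} \ge p]]$ under $p$ is at least $(1-e^{-\lambda})\,\mathbb{E}[b^{(1)}]$, i.e., at least a $1-e^{-\lambda}$ fraction of the optimal social welfare, which is obtained by setting no reserve.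
   Context: $\mathbf{1}[\cdot]$ is the indicator function. Social welfare is the value of the highest bid when the item is sold and $0$ otherwise. *)

From HB Require Import structures.
From mathcomp Require Import all_boot all_order all_algebra.
From mathcomp Require Import all_classical all_reals all_analysis.
Set Implicit Arguments. Unset Strict Implicit. Unset Printing Implicit Defensive.
Import Order.TTheory GRing.Theory Num.Theory.
Local Open Scope classical_set_scope.
Local Open Scope ring_scope.

(* Bids live on a sample space Omega; given the feature z, the joint law of the
   outcome is the probability measure k z (k a probability kernel Z ~> Omega);
   the bid of buyer i is the measurable function b i : Omega -> R. *)

(* highest bid b^(1) = max_i b_i (bids are nonnegative, so 0 is a neutral start) *)
Definition top_bid (R : realType) (T : Type) (n : nat) (b : 'I_n -> T -> R)
  (w : T) : R := \big[Num.max/0]_(i < n) b i w.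

Definition cond_cdf d d' (Z : measurableType d) (Omega : measurableType d')
  (R : realType) (k : R.-pker Z ~> Omega) (n : nat) (b : 'I_n -> Omega -> R)
  (i : 'I_n) (z : Z) (t : R) : R :=
  fine (k z [set w | b i w <= t]).

Definition bids_cond_indep d d' (Z : measurableType d) (Omega : measurableType d')
  (R : realType) (k : R.-pker Z ~> Omega) (n : nat) (b : 'I_n -> Omega -> R) : Prop :=
  forall (z : Z) (A : 'I_n -> set R), (forall i, measurable (A i)) ->
    k z (\bigcap_(i in [set: 'I_n]) (b i @^-1` A i)) =
    (\big[*%E/1%E]_(i < n) k z (b i @^-1` A i))%E.

From HB Require Import structures.
From mathcomp Require Import all_boot all_order all_algebra.
From mathcomp Require Import all_classical all_reals all_analysis.
From mathcomp Require Import lra measurable_realfun.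
Import Order.TTheory GRing.Theory Num.Theory.
Local Open Scope classical_set_scope.
Local Open Scope ring_scope.

(* Fix z and write X for the highest bid, p for p(z) and e := exp(-lam).  The
   event X < p means that every bid is below p, so by independence and
   x <= exp(x - 1), P(X < p) <= prod_i F_i(p) <= exp(-sum_i (1 - F_i(p))) = e.
   Pointwise (1 - e) X + e p <= X 1[p <= X] + p 1[X < p], and in expectation
   the last term is at most p e, which cancels the e p on the left. *)

Section nonneg_integral.
Context d (T : measurableType d) (R : realType).
Variable mu : {measure set T -> \bar R}.

(* No measurability is needed: a nonnegative integral is the supremum of the
   integrals of the simple functions below the integrand. *)
Lemma ge0_le_integralT (f g : T -> \bar R) :
  (forall x, 0 <= f x)%E -> (forall x, f x <= g x)%E ->
  (\int[mu]_x f x <= \int[mu]_x g x)%E.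
Proof.
move=> f0 fg; have g0 x : (0 <= g x)%E by apply: le_trans (f0 x) (fg x).
rewrite (ge0_integralTE mu f0) (ge0_integralTE mu g0).
apply: ereal_sup_le => _ [h hf <-]; exists h => //= x.
exact: le_trans (hf x) (fg x).
Qed.

Lemma ge0_integralDZl (f g : T -> R) (c : R) :
  measurable_fun setT f -> measurable_fun setT g ->
  (forall x, 0 <= f x) -> (forall x, 0 <= g x) -> 0 <= c ->
  (\int[mu]_x (f x + c * g x)%:E =
   \int[mu]_x (f x)%:E + c%:E * \int[mu]_x (g x)%:E)%E.
Proof.
move=> mf mg f0 g0 c0.
under eq_integral do rewrite EFinD.
rewrite ge0_integralD//; last 4 first.
- by move=> x _; rewrite lee_fin.
- exact/measurable_EFinP.
- by move=> x _; rewrite lee_fin mulr_ge0.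
- exact/measurable_EFinP/measurable_funM.
under [X in (_ + X)%E]eq_integral do rewrite EFinM.
rewrite ge0_integralZl_EFin//; last exact/measurable_EFinP.
by move=> x _; rewrite lee_fin.
Qed.

End nonneg_integral.

Lemma indic_preimage_itvcy (T : Type) (R : numDomainType) (X : T -> R) t w :
  \1_(X @^-1` `[t, +oo[) w = ((t <= X w)%R)%:R :> R.
Proof. by rewrite indicE preimage_itvcy mem_setE. Qed.

Lemma threshold_split_le (R : realFieldType) (x t e : R) :
  0 <= x -> 0 <= t -> 0 <= e <= 1 ->
  e * t + (1 - e) * x <= x * ((t <= x)%R)%:R + t * ((x < t)%R)%:R.
Proof. by move=> x0 t0 /andP[e0 e1]; case: leP => /= ?; nra. Qed.

Section threshold.
Context {d} {T : measurableType d} {R : realType}.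
Context {P : {measure set T -> \bar R}}.
Hypothesis P1 : P setT = 1%E.

Lemma integral_above_threshold_ge (X : T -> R) (t e : R) :
  measurable_fun setT X -> (forall w, 0 <= X w) -> 0 <= e <= 1 ->
  (P [set w | (X w < t)%R] <= e%:E)%E ->
  ((1 - e)%:E * \int[P]_w (X w)%:E <=
   \int[P]_w (X w * ((t <= X w)%R)%:R)%:E)%E.
Proof.
move=> mX X0 e01 PXt; have /andP[e0 e1] := e01.
have [t_le0|t_gt0] := leP t 0.
  under [I in (_ <= I)%E]eq_integral do rewrite (le_trans t_le0 (X0 _)) mulr1.
  apply: gee_pMl => //; last by rewrite lee_fin gerBl.
  by apply: integral_ge0 => w _; rewrite lee_fin.
set S := [set w | X w < t].
have mS : measurable S.
  by rewrite /S -preimage_itvNyo -[A in measurable A]setTI; exact: mX.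
have mXt : measurable_fun setT (fun w => X w * ((t <= X w)%R)%:R).
  under eq_fun do rewrite -indic_preimage_itvcy.
  apply: measurable_funM => //; apply: measurable_indic.
  by rewrite -[A in measurable A]setTI; exact: mX.
have indicS w : \1_S w = ((X w < t)%R)%:R :> R by rewrite indicE mem_setE.
have split_integral : ((e * t)%:E + (1 - e)%:E * \int[P]_w (X w)%:E <=
    \int[P]_w (X w * ((t <= X w)%R)%:R)%:E + t%:E * P S)%E.
  have -> : (e * t)%:E = (\int[P]_w (e * t)%:E)%E.
    by rewrite integral_cst // P1 mule1.
  have -> : P S = (\int[P]_w (\1_S w)%:E)%E by rewrite integral_indic // setIT.
  rewrite -!ge0_integralDZl //.
  - apply: ge0_le_integralT => w.
      by rewrite lee_fin addr_ge0 ?mulr_ge0 // ?subr_ge0 // ltW.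
    by rewrite lee_fin indicS threshold_split_le // ltW.
  - by move=> w; rewrite mulr_ge0.
  - exact: ltW.
  - by move=> _; rewrite mulr_ge0 // ltW.
  - by rewrite subr_ge0.
rewrite -(@leeD2lE _ (e * t)%:E) //; apply: le_trans split_integral _.
by rewrite [leRHS]addeC leeD2l // EFinM muleC lee_pmul // lee_fin ltW.
Qed.

End threshold.

Section top_bid.
Context {d} {T : measurableType d} {R : realType}.
Context {n : nat} {b : 'I_n -> T -> R}.

Lemma top_bid_ge0 w : 0 <= top_bid b w.
Proof. exact: bigmax_ge_id. Qed.

Lemma measurable_top_bid :
  (forall i, measurable_fun setT (b i)) -> measurable_fun setT (top_bid b).
Proof.
move=> mb; rewrite /top_bid; elim: (index_enum _) => [|i r IH].
  by under eq_fun do rewrite big_nil; exact: measurable_cst.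
by under eq_fun do rewrite big_cons; exact: measurable_maxr.
Qed.

Lemma top_bid_lt_bigcap t : 0 < t ->
  [set w | top_bid b w < t] = \bigcap_(i in [set: 'I_n]) (b i @^-1` `]-oo, t[).
Proof.
move=> t_gt0; apply/seteqP; split => w /=.
  by move=> /bigmax_ltP[_ bt] i _ /=; rewrite in_itv /= bt.
move=> bt; apply/bigmax_ltP; split => // i _.
by have := bt i I; rewrite /= in_itv.
Qed.

Context {P : {measure set T -> \bar R}}.
Hypothesis P1 : P setT = 1%E.
Hypothesis mb : forall i, measurable_fun setT (b i).
Hypothesis b_indep : forall A : 'I_n -> set R, (forall i, measurable (A i)) ->
  P (\bigcap_(i in [set: 'I_n]) (b i @^-1` A i)) =
  (\big[*%E/1%E]_(i < n) P (b i @^-1` A i))%E.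

Let measurable_bid_preimage i (A : set R) :
  measurable A -> measurable (b i @^-1` A).
Proof. by move=> mA; rewrite -[X in measurable X]setTI; exact: mb. Qed.

Let fin_num_bid_preimage i (A : set R) :
  measurable A -> P (b i @^-1` A) \is a fin_num.
Proof.
move=> mA; rewrite ge0_fin_numE //; apply: le_lt_trans (ltry 1).
by rewrite -P1 le_measure ?inE //; exact: measurable_bid_preimage.
Qed.

Lemma prob_top_bid_lt_le_expR t :
  (P [set w | (top_bid b w < t)%R] <=
   (expR (- \sum_(i < n) (1 - fine (P [set w | (b i w <= t)%R]))))%:E)%E.
Proof.
have [t_le0|t_gt0] := leP t 0.
  rewrite (_ : [set w | _] = set0) ?measure0 ?lee_fin ?expR_ge0 //.
  apply/seteqP; split => w //=.
  by rewrite ltNge (le_trans t_le0 (top_bid_ge0 w)).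
rewrite top_bid_lt_bigcap // b_indep; last by move=> i; exact: measurable_itv.
rewrite -sumrN expR_sum.
rewrite (eq_bigr (fun i => (fine (P (b i @^-1` `]-oo, t[)))%:E)); last first.
  by move=> i _; rewrite fineK //; exact: fin_num_bid_preimage.
rewrite prodEFin lee_fin; apply: ler_prod => i _.
rewrite fine_ge0 ?measure_ge0 //=.
have bit_le : fine (P (b i @^-1` `]-oo, t[)) <= fine (P [set w | b i w <= t]).
  rewrite -(preimage_itvNyc (b i)) fine_le ?fin_num_bid_preimage //.
  apply: le_measure; rewrite ?inE; try exact: measurable_bid_preimage.
  by move=> w /= /ltW.
apply: le_trans bit_le _; rewrite opprB.
by have := expR_ge1Dx (fine (P [set w | b i w <= t]) - 1); rewrite addrC subrK.
Qed.

End top_bid.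

Theorem mainTheorem3 (d d' : measure_display) (Z : measurableType d)
  (Omega : measurableType d') (R : realType)
  (mu : probability Z R) (k : R.-pker Z ~> Omega)
  (n : nat) (b : 'I_n -> Omega -> R) (lam : R) (p : Z -> R) :
  0 < lam ->
  (forall i, measurable_fun setT (b i)) ->
  (forall i w, 0 <= b i w) ->
  bids_cond_indep k b ->
  measurable_fun setT p ->
  (forall z, \sum_(i < n) (1 - cond_cdf k b i z (p z)) = lam) ->
  ((1 - expR (- lam))%R%:E *
     \int[mu]_z \int[k z]_w (top_bid b w)%:E
   <= \int[mu]_z \int[k z]_w
        (top_bid b w * ((p z <= top_bid b w)%R)%:R)%R%:E)%E.
Proof.
(* The nonnegativity of the bids is built into top_bid, a maximum started at
   0, and p need not be measurable since ge0_le_integralT is used for the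
   outer integral. *)
move=> lam_gt0 mb _ b_indep _ cdf_sum.
set e := expR (- lam).
have e01 : 0 <= e <= 1 by rewrite expR_ge0 expR_le1 oppr_le0 ltW.
have e1_ge0 : 0 <= 1 - e by rewrite subr_ge0; case/andP: e01.
have mX := measurable_top_bid mb.
have X_integral_ge0 z : (0 <= \int[k z]_w (top_bid b w)%:E)%E.
  by apply: integral_ge0 => w _; rewrite lee_fin top_bid_ge0.
rewrite -ge0_integralZl_EFin //.
  apply: ge0_le_integralT => z; first by rewrite mule_ge0.
  apply: (integral_above_threshold_ge (prob_kernel z)) => //.
    exact: top_bid_ge0.
  rewrite /e -(cdf_sum z).
  exact: prob_top_bid_lt_le_expR (prob_kernel z) mb (b_indep z) _.
apply: measurable_fun_integral_kernel; first exact: measurable_kernel.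
  by move=> w; rewrite lee_fin top_bid_ge0.
exact/measurable_EFinP.
Qed.
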